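(* Let $n\ge1$ and let $x_1\ge x_2\ge\dots\ge x_n$ be positive integers with $\sum_{i\in[n]}2^{-x_i}\ge 1$. Then there exists a family $\mathcal L=\{L_i\}_{i\in[n]}$ of sets of positive integers with $|L_i|=x_i$ for every $i\in[n]$ such that the discrete interval hypergraph $H_n$ does not admit a unique-maximum coloring from $\mathcal L$. (One such family is $L_i=\{c : x_1+1-x_i\le c\le x_1\}$.)
   Context: For $n\ge1$, $[n]=\{1,\dots,n\}$ and for $s\le t$ in $[n]$, $[s,t]=\{i: s\le i\le t\}$. The discrete interval hypergraph $H_n$ has vertex set $[n]$ and hyperedges all $[s,t]$ with $s\le t$, $s,t\in[n]$. A coloring $C\colon[n]\to\mathbb Z_{>0}$ is a unique-maximum coloring if in every hyperedge the maximum color is attained by exactly one vertex. $H_n$ admits a unique-maximum coloring from $\mathcal L$ if there is a unique-maximum coloring $C$ with $C(i)\in L_i$ for all $i$. *)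

From HB Require Import structures.
From mathcomp Require Import all_boot all_order all_algebra.
Set Implicit Arguments. Unset Strict Implicit. Unset Printing Implicit Defensive.

Definition unique_max_coloring (n : nat) (C : nat -> nat) : Prop :=
  (forall i, 1 <= i <= n -> 0 < C i) /\
  (forall s t, 1 <= s -> s <= t -> t <= n ->
     exists i, (s <= i <= t) /\
       (forall j, s <= j <= t -> j <> i -> C j < C i)).

Definition admits_um_coloring_from (n : nat) (L : nat -> seq nat) : Prop :=
  exists C, unique_max_coloring n C /\ (forall i, 1 <= i <= n -> C i \in L i).

From HB Require Import structures.
From mathcomp Require Import all_boot all_order all_algebra zify.
Import GRing.Theory Num.Theory.

(* With the lists L_i = [x_1 + 1 - x_i, x_1], give vertex j the weight
   b_j = 2^(x_1 - x_j), which is nondecreasing in j and at most 2^(C_j - 1)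
   for any admissible coloring C. The Kraft-type hypothesis says that the
   weights of [1, n] add up to at least 2^(x_1). On the other hand, splitting
   an interval at its unique maximum (of color c) into a left and a right part
   with colors < c shows by induction that the total weight of an interval
   plus its smallest weight is at most 2^c, hence total weight < 2^(x_1). *)

Section IntervalWeights.

Variables (n : nat) (C b : nat -> nat).

Hypothesis C_unique_max : forall s t, 1 <= s -> s <= t -> t <= n ->
  exists i, (s <= i <= t) /\ (forall j, s <= j <= t -> j <> i -> C j < C i).
Hypothesis C_gt0 : forall j, 1 <= j <= n -> 0 < C j.
Hypothesis b_le_color : forall j, 1 <= j <= n -> b j <= 2 ^ (C j).-1.
Hypothesis b_nondecreasing : forall i j, 1 <= i -> i <= j -> j <= n -> b i <= b j.

(* The extra summand v stands for the weight of the maximum just outside the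
   interval on the left; monotonicity of b lets the right part of a split
   play the same role with v := b_i. *)
Lemma interval_weight_le (s e m v : nat) :
  1 <= s <= e -> e <= n.+1 -> v <= 2 ^ m ->
  (forall j, s <= j < e -> v <= b j) -> (forall j, s <= j < e -> C j <= m) ->
  \sum_(s <= j < e) b j + v <= 2 ^ m.
Proof.
have [k] := ubnP (e - s); elim: k s e m v => // k IH s e m v lt_es_k.
move=> /andP[s_gt0 le_se] le_en v_le v_le_b C_le.
case: (ltnP s e) => [lt_se|le_es]; last by rewrite big_geq.
case: e lt_se lt_es_k le_se le_en v_le_b C_le => // t lt_st1 lt_k _ le_tn v_le_b C_le.
have [i [/andP[le_si le_it] i_max]] := C_unique_max _ _ s_gt0 (lt_st1 : s <= t) le_tn.
have i_in : 1 <= i <= n by lia.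
set c := C i in i_max.
have c_gt0 : 0 < c := C_gt0 i i_in.
have bi_le : b i <= 2 ^ c.-1 := b_le_color i i_in.
have C_lt_c j : s <= j < t.+1 -> j <> i -> C j <= c.-1.
  by move=> j_in j_ne_i; rewrite -ltnS prednK //; apply: i_max => //; lia.
have left_le : \sum_(s <= j < i) b j + v <= 2 ^ c.-1.
  apply: IH => //; try lia.
  - by apply: leq_trans (v_le_b i _) bi_le; lia.
  - by move=> j j_in; apply: v_le_b; lia.
  - by move=> j j_in; apply: C_lt_c; lia.
have right_le : \sum_(i.+1 <= j < t.+1) b j + b i <= 2 ^ c.-1.
  apply: IH => //; try lia.
  - by move=> j j_in; apply: b_nondecreasing; lia.
  - by move=> j j_in; apply: C_lt_c; lia.
have c_le_m : 2 ^ c <= 2 ^ m by apply: leq_pexp2l => //; apply: C_le; lia.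
have two_halves : 2 ^ c = 2 ^ c.-1 + 2 ^ c.-1 by rewrite addnn -mul2n -expnS prednK.
rewrite (big_cat_nat le_si (ltnW (le_it : i < t.+1))) /= (big_ltn (le_it : i < t.+1)); lia.
Qed.

End IntervalWeights.

Lemma kraft_sum_scaled (a e m : nat) (x : nat -> nat) :
  (forall i, a <= i < e -> x i <= m) ->
  (1 <= \sum_(a <= i < e) ((2 ^ x i)%:R : rat)^-1)%R ->
  2 ^ m <= \sum_(a <= i < e) 2 ^ (m - x i).
Proof.
move=> x_le_m kraft; rewrite -(ler_nat rat) natr_sum.
have -> : (\sum_(a <= i < e) (2 ^ (m - x i))%:R =
           (2 ^ m)%:R * \sum_(a <= i < e) ((2 ^ x i)%:R)^-1 :> rat)%R.
  rewrite mulr_sumr; apply: eq_big_nat => i /x_le_m le_xm.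
  by rewrite -{2}(subnK le_xm) expnD natrM mulfK // pnatr_eq0 expn_eq0.
by rewrite ler_peMr.
Qed.

Theorem theorem2p6 (n : nat) (x : nat -> nat)
  (hn : (1 <= n)%N)
  (hpos : forall i, (1 <= i <= n)%N -> (0 < x i)%N)
  (hdec : forall i j, (1 <= i)%N -> (i <= j)%N -> (j <= n)%N -> (x j <= x i)%N)
  (hsum : (1 <= \sum_(1 <= i < n.+1) ((2 ^ x i)%:R : rat)^-1)%R) :
  exists L : nat -> seq nat,
    (forall i, (1 <= i <= n)%N ->
       [/\ uniq (L i), size (L i) = x i & all (fun c => 0 < c)%N (L i)]) /\
    ~ admits_um_coloring_from n L.
Proof.
have x_le_x1 i : 1 <= i <= n -> x i <= x 1 by case/andP; apply: hdec.
exists (fun i => iota (x 1 + 1 - x i) (x i)); split.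
  move=> i /x_le_x1 le_x1; rewrite iota_uniq size_iota; split=> //.
  by apply/allP => c; rewrite mem_iota; lia.
move=> [C [[C_gt0 C_unique_max] C_in_L]].
have C_range j : 1 <= j <= n -> x 1 + 1 - x j <= C j < x 1 + 1.
  by move=> j_in; have := C_in_L j j_in; rewrite mem_iota; have := x_le_x1 j j_in; lia.
have weight_ge : 2 ^ x 1 <= \sum_(1 <= j < n.+1) 2 ^ (x 1 - x j).
  by apply: kraft_sum_scaled hsum => i i_in; apply: x_le_x1.
have weight_lt : \sum_(1 <= j < n.+1) 2 ^ (x 1 - x j) + 1 <= 2 ^ x 1.
  apply: (@interval_weight_le n C (fun j => 2 ^ (x 1 - x j)) C_unique_max C_gt0) => //.
  - move=> j j_in; apply: leq_pexp2l => //; have := C_range j j_in; lia.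
  - move=> i j i_gt0 le_ij le_jn; apply: leq_pexp2l => //.
    by have := hdec i j i_gt0 le_ij le_jn; lia.
  - by rewrite expn_gt0.
  - by move=> j _; rewrite expn_gt0.
  - by move=> j j_in; have := C_range j; lia.
lia.
Qed.
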